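(* Let $\mathscr{H}$ be a complex Hilbert space and let $B,C$ be Hilbert–Schmidt operators on $\mathscr{H}$. Then $$w_{(2,e)}^2(B,C)\leq\frac12\Big(\max\{|\mathrm{tr}(B^2)|,|\mathrm{tr}(C^2)|\}+|\mathrm{tr}(BC)|+\max\{\|B\|_2^2,\|C\|_2^2\}+|\mathrm{tr}(BC^* )|\Big).$$
   Context: An operator $T$ on $\mathscr{H}$ is Hilbert–Schmidt if $\sum_i\|Te_i\|^2<\infty$ for some (equivalently every) orthonormal basis $\{e_i\}$; its Hilbert–Schmidt norm is $\|T\|_2=(\mathrm{tr}(T^*T))^{1/2}$. For an operator $T$, $\Re(T)=\frac12(T+T^* )$. The Hilbert–Schmidt Euclidean operator radius is $w_{(2,e)}(B,C)=\sup_{\lambda_1,\lambda_2\in\mathbb{C},\ |\lambda_1|^2+|\lambda_2|^2\leq1}\sup_{\theta\in\mathbb{R}}\|\Re(e^{i\theta}(\lambda_1B+\lambda_2C))\|_2$. *)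

From HB Require Import structures.
From mathcomp Require Import all_boot all_order all_algebra.
From mathcomp Require Import all_classical all_reals all_analysis.
From mathcomp.real_closed Require Import complex.
Set Implicit Arguments.
Unset Strict Implicit.
Unset Printing Implicit Defensive.
Import Order.TTheory GRing.Theory Num.Theory.
Local Open Scope ring_scope.
Local Open Scope classical_set_scope.

Section HilbertDefs.
Variable R : realType.
Local Notation C := R[i].

Definition cabs (z : C) : R := Normc.normc z.

Definition cexpi (th : R) : C := (cos th +i* sin th)%C.

Variable V : lmodType C.
Variable inner : V -> V -> C.

Definition hnorm (x : V) : R := Num.sqrt (complex.Re (inner x x)).

Definition is_inner_product : Prop :=
  [/\ forall (a : C) (x y z : V), inner (a *: x + y) z = a * inner x z + inner y z,
      forall x y : V, inner y x = conjc (inner x y),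
      forall x : V, 0 <= inner x x
    & forall x : V, inner x x = 0 -> x = 0].

Definition hcomplete : Prop :=
  forall u : nat -> V,
    (forall eps : R, 0 < eps -> exists N : nat, forall m n : nat,
        (N <= m)%N -> (N <= n)%N -> hnorm (u m - u n) < eps) ->
    exists l : V, forall eps : R, 0 < eps -> exists N : nat, forall n : nat,
        (N <= n)%N -> hnorm (u n - l) < eps.

Definition is_hilbert_space : Prop := is_inner_product /\ hcomplete.

Definition bounded_linear_op (T : V -> V) : Prop :=
  (forall (a : C) (x y : V), T (a *: x + y) = a *: T x + T y) /\
  exists M : R, forall x : V, hnorm (T x) <= M * hnorm x.

Definition is_adjoint (T Ts : V -> V) : Prop :=
  forall x y : V, inner (T x) y = inner x (Ts y).

Variable I : choiceType.
Variable e : I -> V.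

Definition is_orthonormal_basis : Prop :=
  [/\ forall i, inner (e i) (e i) = 1,
      forall i j, i <> j -> inner (e i) (e j) = 0
    & forall x : V, (forall i, inner x (e i) = 0) -> x = 0].

Definition hs_sum (T : V -> V) : \bar R :=
  (\esum_(i in [set: I]) ((hnorm (T (e i))) ^+ 2)%:E)%E.

Definition hilbert_schmidt (T : V -> V) : Prop :=
  bounded_linear_op T /\ (hs_sum T < +oo)%E.

(* Hilbert-Schmidt norm ||T||_2 = (tr (T^* T))^{1/2} = (sum_i ||T e_i||^2)^{1/2} *)
Definition hs_norm (T : V -> V) : R := Num.sqrt (fine (hs_sum T)).

Definition has_sum (f : I -> C) (s : C) : Prop :=
  forall eps : R, 0 < eps -> exists F0 : set I, finite_set F0 /\
    forall F : set I, finite_set F -> F0 `<=` F ->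
      cabs ((\sum_(i \in F) f i) - s) < eps.

Definition trace (T : V -> V) : C :=
  xget 0 [set s | has_sum (fun i => inner (T (e i)) (e i)) s].

Definition re_op (T Ts : V -> V) : V -> V := fun x => 2^-1 *: (T x + Ts x).

(* Hilbert-Schmidt Euclidean operator radius w_(2,e)(B,C);
   Bs, Cs are the adjoints of B, C, so that
   (e^{i th}(l1 B + l2 C))^* = e^{-i th}(conj l1 B^* + conj l2 C^* ). *)
Definition w2e (B Bs D Ds : V -> V) : R := sup
  [set r : R | exists (l1 l2 : R[i]) (th : R),
     cabs l1 ^+ 2 + cabs l2 ^+ 2 <= 1 /\
     r = hs_norm (re_op
           (fun x => cexpi th *: (l1 *: B x + l2 *: D x))
           (fun x => conjc (cexpi th) *: (conjc l1 *: Bs x + conjc l2 *: Ds x)))].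

End HilbertDefs.

(* Write S = e^{i th} (l1 B + l2 C), so that S^* = e^{-i th} (conj l1 B^* + conj l2 C^* ).
   As ||S^* ||_2 = ||S||_2, one has ||Re S||_2^2 = (||S||_2^2 + Re tr (S^2)) / 2, where
     ||S||_2^2 = ||S^* ||_2^2 = |l1|^2 ||B||_2^2 + |l2|^2 ||C||_2^2 + 2 Re (l1 conj l2 tr (B C^* )),
     tr (S^2) = e^{2 i th} (l1^2 tr (B^2) + 2 l1 l2 tr (B C) + l2^2 tr (C^2))
   (the last one using tr (C B) = tr (B C)).  Bounding each term by moduli, with
   2 |l1| |l2| <= |l1|^2 + |l2|^2 <= 1 and |l1|^2 p + |l2|^2 q <= max p q, bounds every element
   of the set whose supremum is w_(2,e)(B, C).
   Both Hilbert-Schmidt facts used, ||T^* ||_2 = ||T||_2 and tr (C B) = tr (B C), rest on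
   Parseval's identity, which is where completeness of the space enters; the traces, defined as
   unordered sums, exist by polarization since (B e_i), (C e_i), (B^* e_i), (C^* e_i) are
   square-summable. *)

From HB Require Import structures.
From mathcomp Require Import all_boot all_order all_algebra.
From mathcomp Require Import all_classical all_reals all_analysis.
From mathcomp.real_closed Require Import complex.
From mathcomp Require Import ring lra.
Import Order.TTheory GRing.Theory Num.Theory.

Set Implicit Arguments.
Unset Strict Implicit.
Unset Printing Implicit Defensive.
Local Open Scope ring_scope.
Local Open Scope complex_scope.
Local Open Scope classical_set_scope.

Section ComplexModulus.
Variable R : realType.
Local Notation C := R[i].
Implicit Types z w : C.

Definition cabs2 z : R := cabs z ^+ 2.

Lemma cabs2E (a b : R) : cabs2 (a +i* b) = a ^+ 2 + b ^+ 2.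
Proof. by rewrite /cabs2 /cabs /= sqr_sqrtr // addr_ge0 // sqr_ge0. Qed.

Lemma cabs_ge0 z : 0 <= cabs z.
Proof. by case: z => a b; rewrite /cabs /= sqrtr_ge0. Qed.

Lemma cabs2_ge0 z : 0 <= cabs2 z.
Proof. exact: sqr_ge0. Qed.

Lemma cabsM z w : cabs (z * w) = cabs z * cabs w.
Proof. exact: Normc.normcM. Qed.

Lemma cabsJ z : cabs (conjc z) = cabs z.
Proof. by case: z => a b; rewrite /cabs /= sqrrN. Qed.

Lemma cabs2J z : cabs2 (conjc z) = cabs2 z.
Proof. by rewrite /cabs2 cabsJ. Qed.

Lemma cabsN z : cabs (- z) = cabs z.
Proof. exact: normcN. Qed.

Lemma cabsD z w : cabs (z + w) <= cabs z + cabs w.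
Proof. exact: le_normcD. Qed.

Lemma cabs2D z w : cabs2 (z + w) <= 2 * cabs2 z + 2 * cabs2 w.
Proof.
case: z w => a b [c d]; rewrite /= !cabs2E.
by have := sqr_ge0 (a - c); have := sqr_ge0 (b - d); nra.
Qed.

Lemma cabs_eq0 z : cabs z = 0 -> z = 0.
Proof. exact: Normc.eq0_normc. Qed.

Lemma cabs2_eq0 z : cabs2 z = 0 -> z = 0.
Proof. by move/eqP; rewrite sqrf_eq0 => /eqP /cabs_eq0. Qed.

Lemma cabs_real (r : R) : cabs r%:C = `|r|.
Proof. by rewrite /cabs /= expr0n addr0 sqrtr_sqr. Qed.

Lemma mulcJ z : z * conjc z = (cabs2 z)%:C.
Proof. by case: z => a b; rewrite cabs2E /=; simpc; rewrite -complexr0; congr (_ +i* _); ring. Qed.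

Lemma Re_le_cabs z : complex.Re z <= cabs z.
Proof.
case: z => a b; rewrite /cabs /=; apply: (le_trans (ler_norm a)).
by rewrite -sqrtr_sqr ler_wsqrtr // lerDl sqr_ge0.
Qed.

Lemma ReJ z : complex.Re (conjc z) = complex.Re z.
Proof. by case: z. Qed.

Lemma cabs_expi (th : R) : cabs (cexpi th) = 1.
Proof. by rewrite /cabs /cexpi /= cos2Dsin2 sqrtr1. Qed.

End ComplexModulus.

Section InnerProduct.
Variable R : realType.
Local Notation C := R[i].
Variable V : lmodType C.
Variable inner : V -> V -> C.
Hypothesis Hip : is_inner_product inner.

Lemma inner0l z : inner 0 z = 0.
Proof.
case: Hip => lin _ _ _; have := lin 1 0 0 z; rewrite scale1r addr0 mul1r => h.
by apply: (addrI (inner 0 z)); rewrite addr0 -h.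
Qed.

Lemma innerDl x y z : inner (x + y) z = inner x z + inner y z.
Proof. by case: Hip => lin _ _ _; rewrite -{1}[x]scale1r lin mul1r. Qed.

Lemma innerZl (a : C) x z : inner (a *: x) z = a * inner x z.
Proof. by case: Hip => lin _ _ _; rewrite -[a *: x]addr0 lin inner0l addr0. Qed.

Lemma innerC x y : inner y x = conjc (inner x y).
Proof. by case: Hip. Qed.

Lemma innerDr x y z : inner x (y + z) = inner x y + inner x z.
Proof. by rewrite innerC innerDl rmorphD /= -!innerC. Qed.

Lemma innerZr (a : C) x z : inner x (a *: z) = conjc a * inner x z.
Proof. by rewrite innerC innerZl rmorphM /= -innerC. Qed.

Lemma innerNl x z : inner (- x) z = - inner x z.
Proof. by rewrite -scaleN1r innerZl mulN1r. Qed.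

Lemma innerNr x z : inner x (- z) = - inner x z.
Proof. by rewrite -scaleN1r innerZr rmorphN rmorph1 mulN1r. Qed.

Lemma inner_suml (J : Type) (s : seq J) (P : pred J) (F : J -> V) z :
  inner (\sum_(j <- s | P j) F j) z = \sum_(j <- s | P j) inner (F j) z.
Proof.
elim: s => [|j s IH]; first by rewrite !big_nil inner0l.
by rewrite !big_cons; case: (P j); rewrite ?innerDl IH.
Qed.

Lemma inner_sumr (J : Type) (s : seq J) (P : pred J) (F : J -> V) z :
  inner z (\sum_(j <- s | P j) F j) = \sum_(j <- s | P j) inner z (F j).
Proof. by rewrite innerC inner_suml rmorph_sum; apply: eq_bigr => j _ /=; rewrite -innerC. Qed.

Definition sqnorm x := complex.Re (inner x x).

Lemma innerxx x : inner x x = (sqnorm x)%:C.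
Proof.
case: Hip => _ _ ge0 _; have := ger0_Im (ge0 x); rewrite /sqnorm.
by case: (inner x x) => a b /= ->.
Qed.

Lemma sqnorm_ge0 x : 0 <= sqnorm x.
Proof. by case: Hip => _ _ ge0 _; have := ge0 x; rewrite lecE => /andP[]. Qed.

Lemma hnorm_sqr x : hnorm inner x ^+ 2 = sqnorm x.
Proof. by rewrite /hnorm sqr_sqrtr // sqnorm_ge0. Qed.

Lemma hnorm_lt_sqrt x eps : 0 < eps -> (hnorm inner x < Num.sqrt eps) = (sqnorm x < eps).
Proof. exact: ltr_sqrt. Qed.

Lemma sqnormD x y : sqnorm (x + y) = sqnorm x + sqnorm y + 2 * complex.Re (inner x y).
Proof. by rewrite /sqnorm innerDl !innerDr [inner y x]innerC !raddfD /= ReJ; ring. Qed.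

Lemma sqnormN x : sqnorm (- x) = sqnorm x.
Proof. by rewrite /sqnorm innerNl innerNr opprK. Qed.

Lemma sqnormB x y : sqnorm (x - y) = sqnorm x + sqnorm y - 2 * complex.Re (inner x y).
Proof. by rewrite sqnormD sqnormN innerNr raddfN /=; ring. Qed.

Lemma sqnormZ (a : C) x : sqnorm (a *: x) = cabs2 a * sqnorm x.
Proof. by rewrite /sqnorm innerZl innerZr mulrA mulcJ innerxx -rmorphM. Qed.

Lemma sqnormD_le x y : sqnorm (x + y) <= 2 * sqnorm x + 2 * sqnorm y.
Proof. by have := sqnorm_ge0 (x - y); rewrite sqnormB sqnormD; lra. Qed.

Lemma adjoint_sym T Ts : is_adjoint inner T Ts -> is_adjoint inner Ts T.
Proof. by move=> h x y; rewrite innerC -h -innerC. Qed.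

Lemma hcomplete_sqnorm (u : nat -> V) : hcomplete inner ->
  (forall eps, 0 < eps -> exists N, forall m n, (N <= m)%N -> (N <= n)%N ->
     sqnorm (u m - u n) < eps) ->
  exists l, forall eps, 0 < eps -> exists N, forall n, (N <= n)%N -> sqnorm (u n - l) < eps.
Proof.
move=> Hc cauchy; have [l ul] : exists l, forall eps, 0 < eps -> exists N,
    forall n, (N <= n)%N -> hnorm inner (u n - l) < eps.
  apply: Hc => eps eps0; have [N hN] := cauchy _ (exprn_gt0 2 eps0).
  exists N => m n hm hn; have -> : eps = Num.sqrt (eps ^+ 2) by rewrite sqrtr_sqr gtr0_norm.
  by rewrite hnorm_lt_sqrt ?exprn_gt0 //; apply: hN.
exists l => eps eps0; have [N hN] := ul (Num.sqrt eps) ltac:(by rewrite sqrtr_gt0).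
by exists N => n /hN; rewrite hnorm_lt_sqrt.
Qed.

End InnerProduct.

Section Bessel.
Variable R : realType.
Local Notation C := R[i].
Variable V : lmodType C.
Variable inner : V -> V -> C.
Hypothesis Hip : is_inner_product inner.
Variable I : choiceType.
Variable e : I -> V.
Hypothesis Hb : is_orthonormal_basis inner e.
Local Notation sqnorm := (sqnorm inner).

Definition fourier_sum (t : seq I) (x : V) : V := \sum_(j <- t) inner x (e j) *: e j.

Lemma inner_e j k : inner (e j) (e k) = (j == k)%:R.
Proof. by case: Hb => h1 h2 _; case: eqP => [->|/h2]. Qed.

Lemma inner_comb_e (t : seq I) (d : I -> C) k : uniq t ->
  inner (\sum_(j <- t) d j *: e j) (e k) = if k \in t then d k else 0.
Proof.
move=> ut; rewrite (inner_suml Hip).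
rewrite (eq_bigr (fun j => if j == k then d k else 0)); last first.
  by move=> j _; rewrite (innerZl Hip) inner_e; case: eqP => [->|_]; rewrite ?mulr1 ?mulr0.
rewrite -big_mkcond /= big_const_seq -[count _ _]/(count_mem k t) count_uniq_mem //.
by case: (k \in t); rewrite /= ?addr0.
Qed.

Lemma sqnorm_comb (t : seq I) (d : I -> C) : uniq t ->
  sqnorm (\sum_(j <- t) d j *: e j) = \sum_(j <- t) cabs2 (d j).
Proof.
move=> ut; rewrite /sqnorm (inner_suml Hip) raddf_sum big_seq [RHS]big_seq.
by apply: eq_bigr => j jt; rewrite (innerZl Hip) (innerC Hip) inner_comb_e // jt mulcJ.
Qed.

Lemma sqnorm_sub_fourier x (t : seq I) : uniq t ->
  sqnorm (x - fourier_sum t x) = sqnorm x - \sum_(j <- t) cabs2 (inner x (e j)).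
Proof.
move=> ut; rewrite /fourier_sum (sqnormB Hip) sqnorm_comb // (inner_sumr Hip).
have -> : \sum_(j <- t) inner x (inner x (e j) *: e j) = (\sum_(j <- t) cabs2 (inner x (e j)))%:C.
  by rewrite rmorph_sum; apply: eq_bigr => j _; rewrite (innerZr Hip) mulrC mulcJ.
by rewrite /=; ring.
Qed.

Lemma bessel x (t : seq I) : uniq t ->
  \sum_(j <- t) cabs2 (inner x (e j)) <= sqnorm x.
Proof.
by move=> ut; have := sqnorm_ge0 Hip (x - fourier_sum t x); rewrite sqnorm_sub_fourier // subr_ge0.
Qed.

Lemma cabs2_inner_e_le x j : cabs2 (inner x (e j)) <= sqnorm x.
Proof. by have := bessel x (t := [:: j]) erefl; rewrite big_seq1. Qed.

End Bessel.

Lemma archi_inv_lt (R : realType) (eps : R) : 0 < eps ->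
  exists N, forall n, (N <= n)%N -> n.+1%:R^-1 < eps.
Proof.
move=> eps0; exists (Num.Def.archi_bound eps^-1) => n hn.
have := @archi_boundP _ eps^-1 ltac:(by rewrite invr_ge0 ltW); rewrite -(ler_nat R) in hn => h.
rewrite -[X in _ < X](invrK eps) ltf_pV2 ?posrE ?invr_gt0 // -addn1 natrD; lra.
Qed.

Lemma big_subset_split (M : zmodType) (T : eqType) (a b : seq T) (f : T -> M) :
  uniq a -> uniq b -> {subset a <= b} ->
  \sum_(j <- b) f j = \sum_(j <- a) f j + \sum_(j <- [seq j <- b | j \notin a]) f j.
Proof.
move=> ua ub sab; rewrite (bigID (mem a)) big_filter /=; congr (_ + _).
rewrite -big_filter; apply: perm_big; apply: uniq_perm; rewrite ?filter_uniq //.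
by move=> j; rewrite mem_filter; case ja: (j \in a); rewrite //= sab.
Qed.

Section Exhaustion.
Variable R : realType.
Variable I : choiceType.
Implicit Types (f : I -> R) (t : seq I).

Lemma sum_le_esum f t : uniq t -> (forall j, 0 <= f j) ->
  ((\sum_(j <- t) f j)%:E <= \esum_(j in [set: I]) (f j)%:E)%E.
Proof.
move=> ut f0; apply: esum_ge; exists [set` t]; first by split => //; exact: finite_seq.
by rewrite -sumEFin fsbig_seq.
Qed.

Lemma esum_approx f (s eps : R) : 0 < eps ->
  \esum_(j in [set: I]) (f j)%:E = s%:E ->
  exists t, uniq t /\ s - eps < \sum_(j <- t) f j.
Proof.
move=> eps0 fs.
have : ((s - eps)%:E < \esum_(j in [set: I]) (f j)%:E)%E by rewrite fs lte_fin; lra.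
case/ereal_sup_gt => _ [X [finX _] <-].
rewrite fsbig_finite //= sumEFin lte_fin => h.
by exists (finmap.enum_fset (fset_set X)); split => //; exact: finmap.fset_uniq.
Qed.

(* The first [n + 1] approximating index sets, merged, give a nested exhaustion. *)
Lemma esum_exhaustion f (s : R) : (forall j, 0 <= f j) ->
  \esum_(j in [set: I]) (f j)%:E = s%:E ->
  exists G : nat -> seq I, [/\ forall n, uniq (G n),
    forall n m, (n <= m)%N -> {subset G n <= G m}
  & forall n, s - n.+1%:R^-1 < \sum_(j <- G n) f j].
Proof.
move=> f0 fs.
have /choice[h hh] n : exists t, uniq t /\ s - n.+1%:R^-1 < \sum_(j <- t) f j.
  by apply: esum_approx => //; rewrite invr_gt0 ltr0n.
exists (fun n => undup (flatten [seq h k | k <- iota 0 n.+1])); split.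
- by move=> n; exact: undup_uniq.
- move=> n m nm j; rewrite !mem_undup => /flatten_mapP [k kin jk].
  by apply/flatten_mapP; exists k => //; move: kin; rewrite !mem_iota !add0n => /leq_trans; apply.
- move=> n; have [hu hl] := hh n; apply: (lt_le_trans hl).
  rewrite [leRHS](@big_subset_split _ _ (h n)) ?undup_uniq ?lerDl ?sumr_ge0 //.
  move=> j jh; rewrite mem_undup; apply/flatten_mapP.
  by exists n; rewrite ?mem_iota ?add0n ?ltnS ?leqnn.
Qed.

End Exhaustion.

Section Parseval.
Variable R : realType.
Local Notation C := R[i].
Variable V : lmodType C.
Variable inner : V -> V -> C.
Hypothesis Hip : is_inner_product inner.
Hypothesis Hc : hcomplete inner.
Variable I : choiceType.
Variable e : I -> V.
Hypothesis Hb : is_orthonormal_basis inner e.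
Local Notation sqnorm := (sqnorm inner).

Variables (x : V) (s : R) (G : nat -> seq I).
Hypothesis coef_esum : \esum_(j in [set: I]) (cabs2 (inner x (e j)))%:E = s%:E.
Hypothesis G_uniq : forall n, uniq (G n).
Hypothesis G_nested : forall n m, (n <= m)%N -> {subset G n <= G m}.
Hypothesis G_approx : forall n, s - n.+1%:R^-1 < \sum_(j <- G n) cabs2 (inner x (e j)).
Local Notation y n := (fourier_sum inner e (G n) x).

Lemma coef_sum_le t : uniq t -> \sum_(j <- t) cabs2 (inner x (e j)) <= s.
Proof. by move=> ut; rewrite -lee_fin -coef_esum; apply: sum_le_esum => // j; exact: cabs2_ge0. Qed.

Lemma fourier_sum_cauchy n m : (n <= m)%N -> sqnorm (y m - y n) <= n.+1%:R^-1.
Proof.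
move=> nm; have sub := G_nested nm.
rewrite /fourier_sum (big_subset_split _ (G_uniq n) (G_uniq m) sub) addrC addKr.
rewrite (sqnorm_comb Hip Hb) ?filter_uniq //.
have := coef_sum_le (G_uniq m); rewrite (big_subset_split _ (G_uniq n) (G_uniq m) sub).
(* Generalizing identifies the differently elaborated copies of [n.+1%:R^-1],
   which [lra] would otherwise treat as distinct atoms. *)
have := G_approx n; move: (n.+1%:R^-1) => r; lra.
Qed.

Lemma cabs2_inner_sub_fourier n j : cabs2 (inner (x - y n) (e j)) <= n.+1%:R^-1.
Proof.
rewrite (innerDl Hip) (innerNl Hip) (inner_comb_e Hip Hb) //.
case: ifP => jG; first by rewrite subrr /cabs2 /cabs Normc.normc0 expr0n /= invr_ge0.
have := coef_sum_le (t := j :: G n); rewrite /= jG G_uniq big_cons subr0 => /(_ isT).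
by have := G_approx n; move: (n.+1%:R^-1) => r; lra.
Qed.

Lemma fourier_sum_cvg : exists l, forall eps, 0 < eps ->
  exists N, forall n, (N <= n)%N -> sqnorm (y n - l) < eps.
Proof.
apply: (hcomplete_sqnorm Hc) => eps eps0; have [N hN] := archi_inv_lt eps0.
exists N => m n hm hn; case: (leqP n m) => nm.
  exact: le_lt_trans (fourier_sum_cauchy nm) (hN _ hn).
rewrite -(sqnormN Hip) opprB; exact: le_lt_trans (fourier_sum_cauchy (ltnW nm)) (hN _ hm).
Qed.

Lemma fourier_sum_limit l : (forall eps, 0 < eps ->
    exists N, forall n, (N <= n)%N -> sqnorm (y n - l) < eps) -> l = x.
Proof.
move=> yl; apply/esym/eqP; rewrite -subr_eq0; apply/eqP; case: Hb => _ _; apply=> j.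
apply: cabs2_eq0; apply/eqP; rewrite eq_le cabs2_ge0 andbT; apply/ler_addgt0Pr => eps eps0.
suff : cabs2 (inner (x - l) (e j)) <= eps by rewrite add0r.
have eps4 : 0 < eps / 4 by rewrite divr_gt0.
have [N1 hN1] := archi_inv_lt eps4; have [N2 hN2] := yl _ eps4.
pose n := maxn N1 N2; have := hN1 n (leq_maxl _ _); have := hN2 n (leq_maxr _ _).
have := cabs2_inner_sub_fourier n j; have := cabs2_inner_e_le Hip Hb (y n - l) j.
have := cabs2D (inner (x - y n) (e j)) (inner (y n - l) (e j)).
by rewrite -(innerDl Hip) addrA subrK; move: (n.+1%:R^-1) => r; lra.
Qed.

Lemma sqnorm_le_coef_sum : sqnorm x <= s.
Proof.
have [l yl] := fourier_sum_cvg; have lx := fourier_sum_limit yl; subst l.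
apply/ler_addgt0Pr => eps eps0; have [N hN] := yl _ eps0.
have := hN N (leqnn N); rewrite -(sqnormN Hip) opprB (sqnorm_sub_fourier Hip Hb) //.
by have := coef_sum_le (G_uniq N); lra.
Qed.

End Parseval.

Lemma parseval_le (R : realType) (V : lmodType R[i]) (inner : V -> V -> R[i])
    (I : choiceType) (e : I -> V) :
  is_inner_product inner -> hcomplete inner -> is_orthonormal_basis inner e ->
  forall x, ((sqnorm inner x)%:E <= \esum_(j in [set: I]) (cabs2 (inner x (e j)))%:E)%E.
Proof.
move=> Hip Hc Hb x; have f0 j : 0 <= cabs2 (inner x (e j)) by exact: cabs2_ge0.
case fs : (\esum_(j in [set: I]) _) => [s| |]; last 2 first.
- by rewrite leey.
- have : (0 <= \esum_(j in [set: I]) (cabs2 (inner x (e j)))%:E)%E.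
    by apply: esum_ge0 => j _; rewrite lee_fin.
  by rewrite fs.
have [G [Gu Gn Ga]] := esum_exhaustion f0 fs.
by rewrite lee_fin; exact: sqnorm_le_coef_sum Gu Gn Ga.
Qed.

Section HilbertSchmidtAdjoint.
Variable R : realType.
Local Notation C := R[i].
Variable V : lmodType C.
Variable inner : V -> V -> C.
Hypothesis Hip : is_inner_product inner.
Hypothesis Hc : hcomplete inner.
Variable I : choiceType.
Variable e : I -> V.
Hypothesis Hb : is_orthonormal_basis inner e.
Local Notation sqnorm := (sqnorm inner).
Local Notation hs_sum := (hs_sum inner e).

Lemma hs_sumE T : hs_sum T = \esum_(i in [set: I]) (sqnorm (T (e i)))%:E.
Proof. by apply: eq_esum => i _; rewrite (hnorm_sqr Hip). Qed.

Lemma hs_sum_ge0 T : (0 <= hs_sum T)%E.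
Proof. by apply: esum_ge0 => i _; rewrite lee_fin sqr_ge0. Qed.

Lemma sqr_hs_norm T : hs_norm inner e T ^+ 2 = fine (hs_sum T).
Proof. by rewrite /hs_norm sqr_sqrtr // fine_ge0 // hs_sum_ge0. Qed.

(* sum_i |T^* e_i|^2 = sum_i sum_j |<T e_j, e_i>|^2 by Parseval, and exchanging
   the sums, Bessel bounds it by sum_j |T e_j|^2. *)
Lemma hs_sum_adjoint_le T Ts : is_adjoint inner T Ts -> (hs_sum Ts <= hs_sum T)%E.
Proof.
move=> hT; rewrite !hs_sumE; apply: ge_ereal_sup => _ [X [finX _] <-].
apply: (@le_trans _ _ (\sum_(i \in X) \esum_(j in [set: I]) (cabs2 (inner (T (e j)) (e i)))%:E)%E).
  apply: lee_fsum => // i _; apply: le_trans (parseval_le Hip Hc Hb _) _.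
  by apply: le_esum => j _; rewrite lee_fin hT (innerC Hip) cabs2J.
rewrite fsbig_finite //= -esum_sum; last by move=> *; rewrite lee_fin cabs2_ge0.
apply: le_esum => j _; rewrite sumEFin lee_fin; apply: (bessel Hip Hb).
exact: finmap.fset_uniq.
Qed.

Lemma hs_sum_adjoint T Ts : is_adjoint inner T Ts -> hs_sum Ts = hs_sum T.
Proof.
move=> hT; apply/eqP; rewrite eq_le hs_sum_adjoint_le //=.
exact/hs_sum_adjoint_le/(adjoint_sym Hip).
Qed.

End HilbertSchmidtAdjoint.

Section NetSums.
Variable R : realType.
Local Notation C := R[i].
Variable I : choiceType.
Implicit Types (f g : I -> C) (a b : C).

Lemma has_sum_unique f a b : has_sum f a -> has_sum f b -> a = b.
Proof.
move=> fa fb; apply/eqP; rewrite -subr_eq0; apply/eqP; apply: cabs_eq0.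
apply/eqP; rewrite eq_le cabs_ge0 andbT leNgt; apply/negP => ab0.
have eps0 : 0 < cabs (a - b) / 4 by rewrite divr_gt0.
have [Fa [finA Ha]] := fa _ eps0; have [Fb [finB Hb]] := fb _ eps0.
have finU : finite_set (Fa `|` Fb) by rewrite finite_setU.
have := Ha _ finU (@subsetUl _ _ _); have := Hb _ finU (@subsetUr _ _ _).
set S := \sum_(i \in _) f i => h1 h2.
by have := cabsD (a - S) (S - b); rewrite addrA subrK -[cabs (a - S)]cabsN opprB; lra.
Qed.

Lemma eq_has_sum f g a : f =1 g -> has_sum f a -> has_sum g a.
Proof. by move=> /boolp.funext ->. Qed.

Lemma has_sumD f g a b : has_sum f a -> has_sum g b ->
  has_sum (fun i => f i + g i) (a + b).
Proof.
move=> fa gb eps eps0; have eps2 : 0 < eps / 2 by rewrite divr_gt0.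
have [Fa [finA Ha]] := fa _ eps2; have [Fb [finB Hb]] := gb _ eps2.
exists (Fa `|` Fb); split; first by rewrite finite_setU.
move=> F finF; rewrite subUset => -[sa sb]; rewrite fsbig_split //.
have := Ha _ finF sa; have := Hb _ finF sb.
set Sa := \sum_(i \in F) f i; set Sb := \sum_(i \in F) g i => h1 h2.
by have := cabsD (Sa - a) (Sb - b); rewrite addrACA -opprD; lra.
Qed.

Lemma has_sumMl k f a : has_sum f a -> has_sum (fun i => k * f i) (k * a).
Proof.
move=> fa eps eps0; have k0 : 0 < cabs k + 1 by have := cabs_ge0 k; lra.
have [F0 [fin0 H0]] := fa _ (divr_gt0 eps0 k0); exists F0; split => // F finF sF.
rewrite !fsbig_finite // -mulr_sumr -mulrBr cabsM -fsbig_finite //.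
have := H0 _ finF sF; rewrite ltr_pdivlMr //; have := cabs_ge0 k.
have := cabs_ge0 (\sum_(i \in F) f i - a); nra.
Qed.

Lemma has_sumN f a : has_sum f a -> has_sum (fun i => - f i) (- a).
Proof. by move=> /(has_sumMl (-1)); rewrite mulN1r; apply: eq_has_sum => i; rewrite mulN1r. Qed.

Lemma has_sumJ f a : has_sum f a -> has_sum (fun i => conjc (f i)) (conjc a).
Proof.
move=> fa eps eps0; have [F0 [fin0 H0]] := fa _ eps0; exists F0; split => // F finF sF.
by rewrite !fsbig_finite // -rmorph_sum -rmorphB cabsJ -fsbig_finite //; apply: H0.
Qed.

Lemma fsum_realC (g : I -> R) (F : set I) : finite_set F ->
  \sum_(i \in F) (g i)%:C = (\sum_(i \in F) g i)%:C.
Proof. by move=> finF; rewrite !fsbig_finite // rmorph_sum. Qed.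

Lemma has_sum_esum (g : I -> R) (t : R) : (forall i, 0 <= g i) ->
  \esum_(i in [set: I]) (g i)%:E = t%:E -> has_sum (fun i => (g i)%:C) t%:C.
Proof.
move=> g0 gt eps eps0.
have : ((t - eps)%:E < \esum_(i in [set: I]) (g i)%:E)%E by rewrite gt lte_fin; lra.
case/ereal_sup_gt => _ [X [finX _] <-]; rewrite fsumEFin // lte_fin => hX.
exists X; split => // F finF sF.
rewrite fsum_realC // -rmorphB cabs_real.
have : ((\sum_(i \in F) g i)%:E <= t%:E)%E.
  by rewrite -gt -fsumEFin //; apply: esum_ge; exists F.
have : \sum_(i \in X) g i <= \sum_(i \in F) g i.
  rewrite -lee_fin -!fsumEFin //; apply: lee_fsum_nneg_subset => //.
    by move=> i; rewrite !inE; apply: sF.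
  by move=> i _; rewrite lee_fin.
rewrite lee_fin => hXF hFt; rewrite ler0_norm ?subr_le0 //; lra.
Qed.

Lemma esum_has_sum (g : I -> R) (v : C) : (forall i, 0 <= g i) ->
  has_sum (fun i => (g i)%:C) v -> \esum_(i in [set: I]) (g i)%:E = (complex.Re v)%:E.
Proof.
move=> g0 gv; have Re_sum_le (F : set I) : finite_set F ->
    forall eps, cabs (\sum_(i \in F) (g i)%:C - v) < eps ->
    `|\sum_(i \in F) g i - complex.Re v| < eps.
  move=> finF eps; rewrite fsum_realC //; apply: le_lt_trans.
  have := Re_le_cabs ((\sum_(i \in F) g i)%:C - v).
  have := Re_le_cabs (v - (\sum_(i \in F) g i)%:C).
  by rewrite -[cabs (v - _)]cabsN opprB !raddfB /= ler_norml; lra.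
apply/eqP; rewrite eq_le; apply/andP; split.
  apply: ge_ereal_sup => _ [X [finX _] <-]; rewrite fsumEFin // lee_fin.
  apply/ler_addgt0Pr => eps eps0; have [F0 [fin0 H0]] := gv _ eps0.
  have finU : finite_set (X `|` F0) by rewrite finite_setU.
  have := Re_sum_le _ finU _ (H0 _ finU (@subsetUr _ _ _)).
  have : \sum_(i \in X) g i <= \sum_(i \in X `|` F0) g i.
    rewrite -lee_fin -!fsumEFin //; apply: lee_fsum_nneg_subset => //.
      by move=> i; rewrite !inE => ?; left.
    by move=> i _; rewrite lee_fin.
  by move: (\sum_(i \in X `|` F0) g i) => r; rewrite ltr_norml; lra.
have G0 : (0 <= \esum_(i in [set: I]) (g i)%:E)%E by apply: esum_ge0 => i _; rewrite lee_fin.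
case E : (\esum_(i in [set: I]) _) G0 => [s| |] // _; last exact: leey.
rewrite lee_fin; apply/ler_addgt0Pr => eps eps0; have [F0 [fin0 H0]] := gv _ eps0.
have := Re_sum_le _ fin0 _ (H0 _ fin0 (@subset_refl _ _)).
have : ((\sum_(i \in F0) g i)%:E <= s%:E)%E.
  by rewrite -E -fsumEFin //; apply: esum_ge; exists F0.
by rewrite lee_fin ltr_norml; lra.
Qed.

End NetSums.

Section SquareSummable.
Variable R : realType.
Local Notation C := R[i].
Variable V : lmodType C.
Variable inner : V -> V -> C.
Hypothesis Hip : is_inner_product inner.
Variable I : choiceType.
Local Notation sqnorm := (sqnorm inner).
Implicit Types X Y : I -> V.

Lemma polarization x y : inner x y = 4^-1 * ((sqnorm (x + y))%:C - (sqnorm (x + (-1) *: y))%:C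
   + 'i * (sqnorm (x + 'i *: y))%:C - 'i * (sqnorm (x + (- 'i) *: y))%:C).
Proof.
rewrite !(sqnormD Hip) !(sqnormZ Hip) !(innerZr Hip).
have -> : cabs2 (-1 : C) = 1 by rewrite /= cabs2E; ring.
have -> : cabs2 ('i : C) = 1 by rewrite cabs2E; ring.
have -> : cabs2 (- 'i : C) = 1 by rewrite /= cabs2E; ring.
have -> : (4^-1 : C) = (4^-1 : R)%:C by rewrite fmorphV rmorph_nat.
case: (inner x y) => a b /=; move: (sqnorm x) (sqnorm y) => u v.
rewrite -!complexr0; simpc; apply/eqP; rewrite eq_complex /=.
by apply/andP; split; apply/eqP; lra.
Qed.

Definition sqsummable X := (\esum_(i in [set: I]) (sqnorm (X i))%:E < +oo)%E.

Lemma esum_sqnorm_ge0 X : (0 <= \esum_(i in [set: I]) (sqnorm (X i))%:E)%E.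
Proof. by apply: esum_ge0 => i _; rewrite lee_fin sqnorm_ge0. Qed.

Lemma sqsummableD X Y : sqsummable X -> sqsummable Y -> sqsummable (fun i => X i + Y i).
Proof.
move=> sX sY; apply: le_lt_trans (_ : (_ <= \esum_(i in [set: I])
    ((sqnorm (X i))%:E + (sqnorm (X i))%:E + (sqnorm (Y i))%:E + (sqnorm (Y i))%:E))%E) _.
  by apply: le_esum => i _; rewrite -!EFinD lee_fin; have := sqnormD_le Hip (X i) (Y i); lra.
rewrite !esumD; try by move=> i _; rewrite -?EFinD lee_fin ?addr_ge0 ?sqnorm_ge0.
by rewrite !lte_add_pinfty.
Qed.

Lemma sqsummableZ X (c : C) : cabs2 c = 1 -> sqsummable X -> sqsummable (fun i => c *: X i).
Proof. by move=> c1 sX; rewrite /sqsummable; under eq_esum do rewrite (sqnormZ Hip) c1 mul1r. Qed.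

Lemma has_sum_sqnorm X : sqsummable X ->
  has_sum (fun i => inner (X i) (X i)) (fine (\esum_(i in [set: I]) (sqnorm (X i))%:E))%:C.
Proof.
move=> sX; apply: eq_has_sum (has_sum_esum _ _) => [i|i|]; first by rewrite (innerxx Hip).
  exact: sqnorm_ge0.
by rewrite fineK // ge0_fin_numE // esum_sqnorm_ge0.
Qed.

Lemma has_sum_inner X Y : sqsummable X -> sqsummable Y ->
  exists s, has_sum (fun i => inner (X i) (Y i)) s.
Proof.
move=> sX sY; have sXY (c : C) : cabs2 c = 1 -> sqsummable (fun i => X i + c *: Y i).
  by move=> c1; apply: sqsummableD => //; apply: sqsummableZ.
have h1 := has_sum_sqnorm (sXY 1 ltac:(by rewrite cabs2E; ring)).
have h2 := has_sum_sqnorm (sXY (-1) ltac:(by rewrite /= cabs2E; ring)).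
have h3 := has_sum_sqnorm (sXY 'i ltac:(by rewrite cabs2E; ring)).
have h4 := has_sum_sqnorm (sXY (- 'i) ltac:(by rewrite /= cabs2E; ring)).
have := has_sumMl 4^-1 (has_sumD (has_sumD (has_sumD h1 (has_sumN h2))
   (has_sumMl 'i h3)) (has_sumN (has_sumMl 'i h4))).
move/eq_has_sum => h; eexists; apply: h => i /=.
by rewrite (polarization (X i)) scale1r !(innerxx Hip).
Qed.

Lemma has_sum_innerC X Y s : has_sum (fun i => inner (X i) (Y i)) s ->
  has_sum (fun i => inner (Y i) (X i)) (conjc s).
Proof. by move/has_sumJ; apply: eq_has_sum => i; rewrite -(innerC Hip). Qed.

Lemma has_sum_inner_lincomb (a b c d : C) (P Q P' Q' : I -> V) v1 v2 v3 v4 :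
  has_sum (fun i => inner (P i) (P' i)) v1 -> has_sum (fun i => inner (P i) (Q' i)) v2 ->
  has_sum (fun i => inner (Q i) (P' i)) v3 -> has_sum (fun i => inner (Q i) (Q' i)) v4 ->
  has_sum (fun i => inner (a *: P i + b *: Q i) (c *: P' i + d *: Q' i))
    (a * conjc c * v1 + a * conjc d * v2 + b * conjc c * v3 + b * conjc d * v4).
Proof.
move=> h1 h2 h3 h4.
have := has_sumD (has_sumD (has_sumD (has_sumMl (a * conjc c) h1)
   (has_sumMl (a * conjc d) h2)) (has_sumMl (b * conjc c) h3)) (has_sumMl (b * conjc d) h4).
apply: eq_has_sum => i /=.
by rewrite !(innerDl Hip) !(innerDr Hip) !(innerZl Hip) !(innerZr Hip); ring.
Qed.

End SquareSummable.

Section HilbertSchmidtTrace.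
Variable R : realType.
Local Notation C := R[i].
Variable V : lmodType C.
Variable inner : V -> V -> C.
Hypothesis Hip : is_inner_product inner.
Hypothesis Hc : hcomplete inner.
Variable I : choiceType.
Variable e : I -> V.
Hypothesis Hb : is_orthonormal_basis inner e.
Local Notation hs_sum := (hs_sum inner e).
Local Notation trace := (trace inner e).

Lemma hs_sqsummable T : (hs_sum T < +oo)%E -> sqsummable inner (fun i => T (e i)).
Proof. by rewrite (hs_sumE Hip). Qed.

Lemma has_sum_hs T : (hs_sum T < +oo)%E ->
  has_sum (fun i => inner (T (e i)) (T (e i))) (fine (hs_sum T))%:C.
Proof. by move/hs_sqsummable/(has_sum_sqnorm Hip); rewrite -(hs_sumE Hip). Qed.

Lemma hs_sum_has_sum T v : has_sum (fun i => inner (T (e i)) (T (e i))) v ->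
  hs_sum T = (complex.Re v)%:E.
Proof.
move=> Tv; rewrite (hs_sumE Hip); apply: esum_has_sum => [i|]; first exact: sqnorm_ge0.
by apply: eq_has_sum Tv => i; rewrite (innerxx Hip).
Qed.

Lemma has_sum_trace T Ts S : is_adjoint inner T Ts ->
  (hs_sum S < +oo)%E -> (hs_sum Ts < +oo)%E ->
  has_sum (fun i => inner (S (e i)) (Ts (e i))) (trace (T \o S)).
Proof.
move=> aT hS hTs; have [s Ss] := has_sum_inner Hip (hs_sqsummable hS) (hs_sqsummable hTs).
have ex : exists s, has_sum (fun i => inner ((T \o S) (e i)) (e i)) s.
  by exists s; apply: eq_has_sum Ss => i /=; rewrite aT.
by apply: eq_has_sum (xgetPex 0 ex) => i /=; rewrite aT.
Qed.

Lemma hs_sum_adjoint_fin T Ts : is_adjoint inner T Ts ->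
  (hs_sum T < +oo)%E -> (hs_sum Ts < +oo)%E.
Proof. by move=> aT; rewrite (hs_sum_adjoint Hip Hc Hb aT). Qed.

Lemma has_sum_hs_adjoint T Ts : is_adjoint inner T Ts -> (hs_sum T < +oo)%E ->
  has_sum (fun i => inner (Ts (e i)) (Ts (e i))) (fine (hs_sum T))%:C.
Proof.
move=> aT hT; rewrite -(hs_sum_adjoint Hip Hc Hb aT).
exact/has_sum_hs/(hs_sum_adjoint_fin aT).
Qed.

(* ||T||_2 = ||T^*||_2 for T = B + a D^*, whose cross terms are tr(D B) and tr(B D). *)
Lemma trace_comm B Bs D Ds : is_adjoint inner B Bs -> is_adjoint inner D Ds ->
  (hs_sum B < +oo)%E -> (hs_sum D < +oo)%E -> trace (B \o D) = trace (D \o B).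
Proof.
move=> aB aD hB hD; have hBs := hs_sum_adjoint_fin aB hB; have hDs := hs_sum_adjoint_fin aD hD.
have sBs := has_sum_hs_adjoint aB hB; have sDs := has_sum_hs_adjoint aD hD.
have tDB := has_sum_trace aD hB hDs; have tBD := has_sum_trace aB hD hBs.
have key (a : C) : complex.Re (conjc a * trace (D \o B)) = complex.Re (conjc a * trace (B \o D)).
  have aT : is_adjoint inner (fun x => 1 *: B x + a *: Ds x) (fun x => 1 *: Bs x + conjc a *: D x).
    move=> x y; rewrite (innerDl Hip) !(innerZl Hip) (innerDr Hip) !(innerZr Hip) aB.
    by rewrite (adjoint_sym Hip aD) conjcK rmorph1.
  have := hs_sum_adjoint Hip Hc Hb aT.
  rewrite (hs_sum_has_sum (has_sum_inner_lincomb Hip 1 a 1 a (has_sum_hs hB) tDB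
    (has_sum_innerC Hip tDB) sDs)).
  rewrite (hs_sum_has_sum (has_sum_inner_lincomb Hip 1 (conjc a) 1 (conjc a) sBs
    (has_sum_innerC Hip tBD) tBD (has_sum_hs hD))) => -[].
  move: (trace (D \o B)) (trace (B \o D)) => [x y] [x' y']; case: a aT => a b _ /=; lra.
have := key 1; have := key 'i.
by move: (trace (D \o B)) (trace (B \o D)) => [x y] [x' y'] /= k1 k2; congr (_ +i* _); lra.
Qed.

(* The middle terms <S e_i, S^* e_i> and <S^* e_i, S e_i> sum to tr(S^2) and its conjugate. *)
Lemma sqr_hs_norm_re_op S Ss : is_adjoint inner S Ss -> (hs_sum S < +oo)%E ->
  hs_norm inner e (re_op S Ss) ^+ 2 =
    2^-1 * (hs_norm inner e S ^+ 2 + complex.Re (trace (S \o S))).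
Proof.
move=> aS hS; have hSs := hs_sum_adjoint_fin aS hS.
have sSs := has_sum_hs_adjoint aS hS; have tSS := has_sum_trace aS hS hSs.
have := has_sum_inner_lincomb Hip 2^-1 2^-1 2^-1 2^-1 (has_sum_hs hS) tSS
  (has_sum_innerC Hip tSS) sSs.
move/(eq_has_sum (g := fun i => inner (re_op S Ss (e i)) (re_op S Ss (e i)))).
have reE i : inner (2^-1 *: S (e i) + 2^-1 *: Ss (e i)) (2^-1 *: S (e i) + 2^-1 *: Ss (e i)) =
  inner (re_op S Ss (e i)) (re_op S Ss (e i)) by rewrite /re_op scalerDr.
move=> /(_ reE) /hs_sum_has_sum; rewrite !sqr_hs_norm => ->.
have -> : (2^-1 : C) = (2^-1 : R)%:C by rewrite fmorphV rmorph_nat.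
rewrite conjc_real; move: (trace _) (fine (hs_sum S)) => [x y] n /=; lra.
Qed.

End HilbertSchmidtTrace.

Lemma unit_disc_bound (R : realFieldType) (x y p q c : R) :
  0 <= x -> 0 <= y -> x ^+ 2 + y ^+ 2 <= 1 -> 0 <= p -> 0 <= q -> 0 <= c ->
  x ^+ 2 * p + y ^+ 2 * q + 2 * (x * y * c) <= Num.max p q + c.
Proof.
move=> x0 y0 xy1 p0 q0 c0.
have pM : p <= Num.max p q by rewrite le_max lexx.
have qM : q <= Num.max p q by rewrite le_max lexx orbT.
have : 0 <= x ^+ 2 * (Num.max p q - p) by rewrite mulr_ge0 ?sqr_ge0 ?subr_ge0.
have : 0 <= y ^+ 2 * (Num.max p q - q) by rewrite mulr_ge0 ?sqr_ge0 ?subr_ge0.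
have : 0 <= Num.max p q * (1 - (x ^+ 2 + y ^+ 2)) by rewrite mulr_ge0 ?subr_ge0 // (le_trans p0).
have : 0 <= c * (x - y) ^+ 2 by rewrite mulr_ge0 ?sqr_ge0.
have : 0 <= c * (1 - (x ^+ 2 + y ^+ 2)) by rewrite mulr_ge0 ?subr_ge0.
nra.
Qed.

Lemma sup_sqr_le (R : realType) (E : set R) (K : R) : E !=set0 ->
  (forall r, E r -> 0 <= r /\ r ^+ 2 <= K) -> sup E ^+ 2 <= K.
Proof.
move=> [r0 Er0] EK; have [r00 r0K] := EK _ Er0.
have K0 : 0 <= K := le_trans (sqr_ge0 r0) r0K.
have ubE : ubound E (Num.sqrt K).
  by move=> r /EK [r_ge0 rK]; rewrite -(ger0_norm r_ge0) -sqrtr_sqr ler_wsqrtr.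
have supK : sup E <= Num.sqrt K by apply: ge_sup => //; exists r0.
have sup0 : 0 <= sup E by apply: le_trans r00 (ub_le_sup _ Er0); exists (Num.sqrt K).
by rewrite -(sqr_sqrtr K0) lerXn2r // ?nnegrE ?sqrtr_ge0.
Qed.

Section LinearCombination.
Variable R : realType.
Local Notation C := R[i].
Variable V : lmodType C.
Variable inner : V -> V -> C.
Hypothesis Hip : is_inner_product inner.
Hypothesis Hc : hcomplete inner.
Variable I : choiceType.
Variable e : I -> V.
Hypothesis Hb : is_orthonormal_basis inner e.
Variables B Bs D Ds : V -> V.
Hypothesis aB : is_adjoint inner B Bs.
Hypothesis aD : is_adjoint inner D Ds.
Hypothesis hB : (hs_sum inner e B < +oo)%E.
Hypothesis hD : (hs_sum inner e D < +oo)%E.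
Local Notation hs_sum := (hs_sum inner e).
Local Notation hs_norm := (hs_norm inner e).
Local Notation trace := (trace inner e).

Lemma adjoint_lincomb (a b : C) : is_adjoint inner (fun x => a *: B x + b *: D x)
  (fun x => conjc a *: Bs x + conjc b *: Ds x).
Proof.
move=> x y; rewrite (innerDl Hip) !(innerZl Hip) (innerDr Hip) !(innerZr Hip).
by rewrite aB aD !conjcK.
Qed.

Lemma hs_sum_lincomb (a b : C) : hs_sum (fun x => a *: B x + b *: D x) =
  (cabs2 a * fine (hs_sum B) + cabs2 b * fine (hs_sum D)
   + 2 * complex.Re (a * conjc b * trace (B \o Ds)))%:E.
Proof.
have hBs := hs_sum_adjoint_fin Hip Hc Hb aB hB; have hDs := hs_sum_adjoint_fin Hip Hc Hb aD hD.
have tBDs := has_sum_trace Hip aB hDs hBs.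
rewrite -(hs_sum_adjoint Hip Hc Hb (adjoint_lincomb a b)).
rewrite (hs_sum_has_sum Hip (has_sum_inner_lincomb Hip (conjc a) (conjc b) (conjc a) (conjc b)
  (has_sum_hs_adjoint Hip Hc Hb aB hB) (has_sum_innerC Hip tBDs) tBDs
  (has_sum_hs_adjoint Hip Hc Hb aD hD))).
congr (_%:E); move: (trace _) (fine _) (fine _) => [t1 t2] nB nD.
by case: a b => [a1 a2] [b1 b2]; rewrite !cabs2E /=; ring.
Qed.

Lemma trace_sqr_lincomb (a b : C) :
  trace ((fun x => a *: B x + b *: D x) \o (fun x => a *: B x + b *: D x)) =
  a ^+ 2 * trace (B \o B) + 2 * a * b * trace (B \o D) + b ^+ 2 * trace (D \o D).
Proof.
have hBs := hs_sum_adjoint_fin Hip Hc Hb aB hB; have hDs := hs_sum_adjoint_fin Hip Hc Hb aD hD.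
have hS : (hs_sum (fun x => (a *: B x + b *: D x)%R) < +oo)%E by rewrite hs_sum_lincomb ltry.
have hSs := hs_sum_adjoint_fin Hip Hc Hb (adjoint_lincomb a b) hS.
have := has_sum_inner_lincomb Hip a b (conjc a) (conjc b) (has_sum_trace Hip aB hB hBs)
  (has_sum_trace Hip aD hB hDs) (has_sum_trace Hip aB hD hBs) (has_sum_trace Hip aD hD hDs).
move/(has_sum_unique (has_sum_trace Hip (adjoint_lincomb a b) hS hSs)) => ->.
by rewrite !conjcK -(trace_comm Hip Hc Hb aB aD hB hD); ring.
Qed.

Lemma sqr_hs_norm_re_lincomb_le (a b : C) : cabs a ^+ 2 + cabs b ^+ 2 <= 1 ->
  hs_norm (re_op (fun x => a *: B x + b *: D x) (fun x => conjc a *: Bs x + conjc b *: Ds x)) ^+ 2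
  <= 2^-1 * (Num.max (cabs (trace (B \o B))) (cabs (trace (D \o D))) + cabs (trace (B \o D))
             + Num.max (hs_norm B ^+ 2) (hs_norm D ^+ 2) + cabs (trace (B \o Ds))).
Proof.
move=> ab1; have hS : (hs_sum (fun x => (a *: B x + b *: D x)%R) < +oo)%E.
  by rewrite hs_sum_lincomb ltry.
rewrite (sqr_hs_norm_re_op Hip Hc Hb (adjoint_lincomb a b) hS) !sqr_hs_norm.
rewrite hs_sum_lincomb trace_sqr_lincomb /=.
have Re_le3 (u v w : C) : complex.Re (u * v * w) <= cabs u * cabs v * cabs w.
  by rewrite -!cabsM Re_le_cabs.
have := Re_le3 a (conjc b) (trace (B \o Ds)); rewrite cabsJ.
have := Re_le3 a a (trace (B \o B)); have := Re_le3 b b (trace (D \o D)).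
have := Re_le3 a b (trace (B \o D)).
have := unit_disc_bound (cabs_ge0 a) (cabs_ge0 b) ab1 (cabs_ge0 (trace (B \o B)))
  (cabs_ge0 (trace (D \o D))) (cabs_ge0 (trace (B \o D))).
have := unit_disc_bound (cabs_ge0 a) (cabs_ge0 b) ab1 (fine_ge0 (hs_sum_ge0 inner e B))
  (fine_ge0 (hs_sum_ge0 inner e D)) (cabs_ge0 (trace (B \o Ds))).
rewrite !raddfD /=.
have -> : complex.Re (2 * a * b * trace (B \o D)) = 2 * complex.Re (a * b * trace (B \o D)).
  by rewrite -!mulrA; move: (a * _) => [u v] /=; ring.
rewrite /cabs2 !expr2; lra.
Qed.

End LinearCombination.

Theorem theorem3p4 (R : realType) (V : lmodType R[i]) (inner : V -> V -> R[i])
  (I : choiceType) (e : I -> V) (B Bs C Cs : V -> V) :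
  is_hilbert_space inner ->
  is_orthonormal_basis inner e ->
  hilbert_schmidt inner e B -> hilbert_schmidt inner e C ->
  is_adjoint inner B Bs -> is_adjoint inner C Cs ->
  w2e inner e B Bs C Cs ^+ 2 <=
    2^-1 * (Num.max (cabs (trace inner e (B \o B))) (cabs (trace inner e (C \o C)))
            + cabs (trace inner e (B \o C))
            + Num.max (hs_norm inner e B ^+ 2) (hs_norm inner e C ^+ 2)
            + cabs (trace inner e (B \o Cs))).
Proof.
move=> [Hip Hc] Hb [_ hB] [_ hC] aB aC; apply: sup_sqr_le.
  eexists; exists 0, 0, 0; split; last reflexivity.
  by rewrite /cabs Normc.normc0 expr0n addr0 ler01.
move=> _ [l1 [l2 [th [l12 ->]]]]; split; first exact: sqrtr_ge0.
set ep := cexpi th; have ep1 : cabs ep = 1 by exact: cabs_expi.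
have -> : (fun x => ep *: (l1 *: B x + l2 *: C x)) = (fun x => (ep * l1) *: B x + (ep * l2) *: C x).
  by apply: boolp.funext => x; rewrite scalerDr !scalerA.
have -> : (fun x => conjc ep *: (conjc l1 *: Bs x + conjc l2 *: Cs x)) =
    (fun x => conjc (ep * l1) *: Bs x + conjc (ep * l2) *: Cs x).
  by apply: boolp.funext => x; rewrite scalerDr !scalerA !rmorphM.
by apply: sqr_hs_norm_re_lincomb_le => //; rewrite !cabsM ep1 !mul1r.
Qed.
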